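(* Let $M$ be a finite rectangular monoid, $k$ a field which is a splitting field for the maximal subgroups of $M$, $X,Y\in\Lambda(M)$ with $X<Y$, and $e_X<e_Y$ chosen idempotent generators of $X,Y$. Let $A$ be a $k[G_Y\times G_X^{op}]$-module regarded as an $M$-bimodule via $m\cdot a\cdot m'=\rho_Y(m)a\rho_X(m')$. Then $H^1(M,A)\cong\mathrm{Hom}_{k[G_Y\times G_X^{op}]}(V_{X,Y},A)$.
   Context: $E(M)$ idempotents, $m^\omega$ idempotent power; $e<f$ means $ef=e=fe\neq f$. $M$ rectangular: each $\{f\in E(M):MfM=MeM\}$ closed under multiplication. $\Lambda(M)$: ideals $MeM$ ordered by inclusion; $\sigma(m)=Mm^\omega M$; $\sigma(m)\ge X$ iff $X\subseteq\sigma(m)$; $\nabla X=\{m:X\not\subseteq MmM\}$; $\nabla Y\nabla X=\{ab:a\in\nabla Y,b\in\nabla X\}$. $G_X$ = group of units of $e_XMe_X$; $\rho_X(m)=e_Xme_X$ if $\sigma(m)\ge X$, else $0$. Let $\sim$ be the least equivalence relation on $e_YMe_X$ with: $e_Ymne_X\sim e_Yme_Yne_X$ for all $m,n\in M$; $e_Ymne_X\sim e_Yme_Xne_X$ for all $n$ whenever $\sigma(m)\not\ge Y$; $z\sim z'$ for all $z,z'\in\nabla Y\nabla X\cap e_YMe_X$. $W_{X,Y}=k[e_YMe_X]/Z_{X,Y}$, $Z_{X,Y}$ spanned by $\nabla Y\nabla X\cap e_YMe_X$ and differences of $\sim$-related elements; $W_{X,Y}$ is a $G_Y\times G_X^{op}$-module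 by left/right multiplication, and $a\mapsto\rho_X(a)$ induces a well-defined surjective module map $W_{X,Y}\to kG_X$ (with $G_Y$ acting on $kG_X$ through $\rho_X$). $V_{X,Y}$ is its kernel. $H^1(M,A)$: derivations modulo inner derivations $m\mapsto ma-am$. *)

From HB Require Import structures.
From mathcomp Require Import all_boot all_order all_algebra.
Set Implicit Arguments. Unset Strict Implicit. Unset Printing Implicit Defensive.
Import Order.TTheory GRing.Theory Num.Theory.
Local Open Scope ring_scope.

Record finMonoid := FinMonoid {
  mcar :> finType;
  mmul : mcar -> mcar -> mcar;
  mone : mcar;
  mmulA : associative mmul;
  mmul1m : left_id mone mmul;
  mmulm1 : right_id mone mmul }.
Arguments mmul {_}.
Arguments mone {_}.

Section Monoid.
Variable M : finMonoid.
Local Notation "x ** y" := (mmul x y) (at level 40, left associativity).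

Definition idem (e : M) : bool := e ** e == e.
Definition idem_lt (e f : M) : bool := [&& e ** f == e, f ** e == e & e != f].

Definition mpow (m : M) (n : nat) : M := iter n (mmul m) mone.
Definition omega (m : M) : M :=
  odflt mone [pick x | idem x && [exists n : 'I_#|M|.+1, (0 < (n : nat))%N && (x == mpow m n)]].

Definition ideal (m : M) : {set M} := [set a ** m ** b | a : M, b : M].

Definition rectangular : Prop :=
  forall e, idem e -> forall f f', idem f -> idem f' ->
    ideal f = ideal e -> ideal f' = ideal e ->
    idem (f ** f') && (ideal (f ** f') == ideal e).

(* sigma(m) = M m^omega M ;  sigma(m) >= X  iff  X \subset sigma(m) *)
Definition sigma (m : M) : {set M} := ideal (omega m).

Definition nabla (X : {set M}) : {set M} := [set m | ~~ (X \subset ideal m)].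

Definition inG (e g : M) : bool :=
  (e ** g ** e == g) &&
  [exists h : M, [&& e ** h ** e == h, g ** h == e & h ** g == e]].

Section Split.
Variable k : fieldType.
Definition is_rep (e : M) (n : nat) (rho : M -> 'M[k]_n) : Prop :=
  rho e = 1%:M /\
  forall g h, inG e g -> inG e h -> rho (g ** h) = rho g *m rho h.
Definition rep_irreducible (e : M) (n : nat) (rho : M -> 'M[k]_n) : Prop :=
  (0 < n)%N /\
  forall U : 'M[k]_n, (forall g, inG e g -> (U *m rho g <= U)%MS) ->
    \rank U = 0%N \/ \rank U = n.
Definition rep_abs_irreducible (e : M) (n : nat) (rho : M -> 'M[k]_n) : Prop :=
  forall B : 'M[k]_n, exists c : M -> k, B = \sum_(g | inG e g) c g *: rho g.
Definition splitting_field_for_max_subgroups : Prop :=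
  forall e, idem e -> forall n (rho : M -> 'M[k]_n),
    is_rep e rho -> rep_irreducible e rho -> rep_abs_irreducible e rho.
End Split.

Section Module.
Variables (k : fieldType) (eX eY : M).
Let X := ideal eX.
Let Y := ideal eY.

(* rho_X(m) on basis elements is encoded by the test X \subset sigma m *)
(* k[G_Y x G_X^op]-module structure on A : left G_Y action l, right G_X action r *)
Definition GG_module (A : lmodType k) (l r : M -> {linear A -> A}) : Prop :=
  [/\ forall g h, inG eY g -> inG eY h -> l (g ** h) =1 l g \o l h,
      l eY =1 id,
      forall g h, inG eX g -> inG eX h -> r (g ** h) =1 r h \o r g,
      r eX =1 id &
      forall g h, inG eY g -> inG eX h -> l g \o r h =1 r h \o l g].

(* M-bimodule structure: m . a . m' = rho_Y(m) a rho_X(m') *)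
Definition lactM (A : lmodType k) (l : M -> {linear A -> A}) (m : M) (a : A) : A :=
  if Y \subset sigma m then l (eY ** m ** eY) a else 0.
Definition ractM (A : lmodType k) (r : M -> {linear A -> A}) (a : A) (m : M) : A :=
  if X \subset sigma m then r (eX ** m ** eX) a else 0.

Definition derivation (A : lmodType k) (l r : M -> {linear A -> A}) (d : M -> A) : Prop :=
  forall m n, d (m ** n) = lactM l m (d n) + ractM r (d m) n.
Definition inner_derivation (A : lmodType k) (l r : M -> {linear A -> A}) (d : M -> A) : Prop :=
  exists a : A, forall m, d m = lactM l m a - ractM r a m.

(* the monoid algebra k[M], as functions M -> k *)
Definition kM := {ffun M -> k^o}.
Definition delta (s : M) : kM := [ffun t => (t == s)%:R].
Definition bimul (g h : M) (v : kM) : kM := [ffun t => \sum_(s | g ** s ** h == t) v s].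

Definition SYX : {set M} := [set eY ** m ** eX | m : M].
Definition kS : {vspace kM} := << [seq delta s | s <- enum SYX] >>%VS.

Definition NN (z : M) : bool :=
  (z \in SYX) && [exists a, exists b, [&& a \in nabla Y, b \in nabla X & z == a ** b]].

Definition simgen (z z' : M) : bool :=
  [exists m, exists n,
     (z == eY ** (m ** n) ** eX) &&
     ((z' == eY ** m ** eY ** n ** eX) ||
      (~~ (Y \subset sigma m)) && (z' == eY ** m ** eX ** n ** eX))]
  || (NN z && NN z').
Definition sim (z z' : M) : bool :=
  [&& z \in SYX, z' \in SYX & connect (fun x y => simgen x y || simgen y x) z z'].

Definition ZYX : {vspace kM} :=
  (<< [seq delta z | z <- enum M & NN z] >> +
   << [seq delta p.1 - delta p.2 | p <- [seq (x, y) | x <- enum M, y <- enum M] & sim p.1 p.2] >>)%VS.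

Definition rhoXlin (v : kM) : kM :=
  \sum_(s in SYX | X \subset sigma s) v s *: delta (eX ** s ** eX).

(* preimage in k[e_Y M e_X] of V_{X,Y} = ker (W_{X,Y} -> k G_X); V = KYX / ZYX *)
Definition KYX : {vspace kM} := (kS :&: lker (linfun rhoXlin))%VS.

(* Hom_{k[G_Y x G_X^op]}(V_{X,Y}, A), with V = KYX / ZYX :
   k-linear maps KYX -> A vanishing on ZYX and equivariant. *)
Definition homV (A : lmodType k) (l r : M -> {linear A -> A})
    (f : subvs_of KYX -> A) : Prop :=
  [/\ forall (c : k) u v, f (c *: u + v) = c *: f u + f v,
      forall v, vsval v \in ZYX -> f v = 0 &
      forall g h (v w : subvs_of KYX), inG eY g -> inG eX h ->
        vsval w = bimul g h (vsval v) -> f w = l g (r h (f v))].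
End Module.
End Monoid.

From HB Require Import structures.
From mathcomp Require Import all_boot all_order all_algebra.
From mathcomp Require Import zify.
Set Implicit Arguments. Unset Strict Implicit. Unset Printing Implicit Defensive.

(* For a rectangular monoid, sigma(m) >= X holds exactly when e_X m e_X is a unit
   of e_X M e_X, and rho_X is multiplicative on such elements (by the band laws
   aba = a and abc = ac for idempotents of one J-class); so A is an M-bimodule.
   A derivation d vanishes at e_Y and on nabla Y nabla X and is constant on
   ~-classes, so its linear extension to k[e_Y M e_X] kills Z_{X,Y}.  On V_{X,Y} it
   is G_Y x G_X^op-equivariant, because the terms d(g) rho_X(s) produced by the
   Leibniz rule add up to d(g) acting on rho_X(v) = 0.  Conversely, f : V_{X,Y} -> A
   yields the derivation m |-> f(z - rho_X(z)) with z = e_Y m e_X, and a derivation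
   vanishing on V_{X,Y} is the inner derivation of -d(e_X). *)

Section FiniteMonoid.
Variable M : finMonoid.
Local Notation "x ** y" := (mmul x y) (at level 40, left associativity).

Lemma idealP (x y : M) : reflect (exists a b, y = a ** x ** b) (y \in ideal x).
Proof.
apply: (iffP imset2P) => [[a b _ _ ->]|[a [b ->]]]; first by exists a, b.
by exists a b.
Qed.

Lemma mem_ideal (a x b : M) : a ** x ** b \in ideal x.
Proof. by apply/idealP; exists a, b. Qed.

Lemma ideal_id (x : M) : x \in ideal x.
Proof. by apply/idealP; exists mone, mone; rewrite mmul1m mmulm1. Qed.

Lemma ideal_trans (x y z : M) : y \in ideal x -> z \in ideal y -> z \in ideal x.
Proof.
move=> /idealP[a [b ->]] /idealP[c [d ->]].
by apply/idealP; exists (c ** a), (b ** d); rewrite !mmulA.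
Qed.

Lemma ideal_sub (x y : M) : y \in ideal x -> ideal y \subset ideal x.
Proof. by move=> yx; apply/subsetP => z; apply: ideal_trans. Qed.

Lemma ideal_eq (x y : M) : y \in ideal x -> x \in ideal y -> ideal x = ideal y.
Proof. by move=> yx xy; apply/eqP; rewrite eqEsubset !ideal_sub. Qed.

Lemma mmul2l (x a b d : M) : a ** b = d -> x ** a ** b = x ** d.
Proof. by move=> <-; rewrite !mmulA. Qed.

Lemma mmul3l (x a b c d : M) : a ** b ** c = d -> x ** a ** b ** c = x ** d.
Proof. by move=> <-; rewrite !mmulA. Qed.

Lemma mpowD (m : M) a b : mpow m (a + b) = mpow m a ** mpow m b.
Proof. by elim: a => [|a IH]; rewrite ?mmul1m //= IH mmulA. Qed.

Lemma mpowSr (m : M) n : mpow m n.+1 = mpow m n ** m.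
Proof. by rewrite -addn1 mpowD /= mmulm1. Qed.

Lemma exists_idem_mpow (m : M) :
  exists2 n, (0 < n <= #|M|)%N & idem (mpow m n).
Proof.
have: ~~ injectiveb (fun i : 'I_#|M|.+1 => mpow m i.+1).
  by apply/injectiveP => /leq_card; rewrite card_ord ltnn.
case/injectivePn => i [j] ij eq_ij.
wlog lt_ij : i j ij eq_ij / (i < j)%N.
  move=> W; case: (ltngtP i j) => [|lt_ji|/val_inj eq_ij']; first exact: W.
    by apply: (W j i); rewrite // eq_sym.
  by rewrite eq_ij' eqxx in ij.
set p := (j - i)%N.
have p0 : (0 < p)%N by rewrite subn_gt0.
have per t : (i < t)%N -> mpow m (t + p) = mpow m t.
  move=> lt_it; rewrite -(subnK lt_it) -addnA mpowD.
  by rewrite (_ : (i.+1 + p)%N = j.+1) -?eq_ij -?mpowD //; rewrite /p; lia.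
have perc c t : (i < t)%N -> mpow m (t + c * p) = mpow m t.
  elim: c t => [|c IH] t lt_it; first by rewrite addn0.
  by rewrite mulSn addnA IH ?per //; lia.
set q := (j %/ p * p)%N.
have lt_iq : (i < q)%N.
  have := divn_eq j p; have := ltn_pmod j p0.
  by rewrite /q /p; move: (j %% _)%N => rem; lia.
exists q; first by have := leq_divM j p; have := ltn_ord j; rewrite /q; lia.
by rewrite /idem -mpowD perc.
Qed.

Lemma omegaP (m : M) :
  exists2 n, (0 < n)%N & omega m = mpow m n /\ idem (omega m).
Proof.
rewrite /omega; case: pickP => [x /andP[ix /existsP[n /andP[n0 /eqP ex]]]|none].
  by exists n.
have [n /andP[n0 nM] idn] := exists_idem_mpow m.
have /negP[] := none (mpow m n); rewrite idn.
by apply/existsP; exists (Ordinal (nM : (n < #|M|.+1)%N)); rewrite /= n0 eqxx.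
Qed.

Lemma stableR (e y : M) : e \in ideal (e ** y) -> exists z, e = e ** y ** z.
Proof.
move=> /idealP[a [b he]].
have it n : e = mpow a n ** e ** mpow (y ** b) n.
  elim: n => [|n IH]; first by rewrite mmul1m mmulm1.
  by rewrite {1}IH {1}he mpowSr /= !mmulA.
have [n n0 [-> idw]] := omegaP (y ** b).
have ew : e ** mpow (y ** b) n = e.
  by rewrite {1}(it n) -mmulA (eqP idw) -(it n).
case: n n0 ew {it idw} => // n _ ew.
by exists (b ** mpow (y ** b) n); rewrite -{1}ew /= !mmulA.
Qed.

Lemma stableL (e y : M) : e \in ideal (y ** e) -> exists z, e = z ** (y ** e).
Proof.
move=> /idealP[a [b he]].
have it n : e = mpow (a ** y) n ** e ** mpow b n.
  elim: n => [|n IH]; first by rewrite mmul1m mmulm1.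
  by rewrite {1}IH {1}he mpowSr /= !mmulA.
have [n n0 [-> idw]] := omegaP (a ** y).
have we : mpow (a ** y) n ** e = e.
  by rewrite {1}(it n) !mmulA (eqP idw) -(it n).
case: n n0 we {it idw} => // n _ we.
by exists (mpow (a ** y) n ** a); rewrite -{1}we mpowSr !mmulA.
Qed.

Section MaximalSubgroup.
Variable e : M.
Hypothesis ide : idem e.

Lemma idemP : e ** e = e. Proof. exact/eqP. Qed.

Lemma inGP g : inG e g ->
  [/\ e ** g = g, g ** e = g &
      exists h, [/\ e ** h = h, h ** e = h, g ** h = e & h ** g = e]].
Proof.
case/andP=> /eqP geq /existsP[h /and3P[/eqP heq /eqP gh /eqP hg]].
split; [by rewrite -geq !mmulA idemP | by rewrite -geq -mmulA idemP |].
exists h; split=> //; first by rewrite -heq !mmulA idemP.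
by rewrite -heq -mmulA idemP.
Qed.

Lemma inG_ideal g : inG e g -> e \in ideal g.
Proof.
case/andP=> _ /existsP[h /and3P[_ /eqP gh _]].
by apply/idealP; exists mone, h; rewrite mmul1m gh.
Qed.

Lemma inG_id : inG e e.
Proof.
apply/andP; split; first by rewrite !idemP.
by apply/existsP; exists e; rewrite !idemP eqxx.
Qed.

Lemma inGM g g' : inG e g -> inG e g' -> inG e (g ** g').
Proof.
move=> /inGP[eg ge [h [eh he gh hg]]] /inGP[eg' ge' [h' [eh' he' gh' hg']]].
apply/andP; split; first by rewrite mmulA eg -mmulA ge'.
apply/existsP; exists (h' ** h); rewrite mmulA eh' -mmulA he eqxx /=.
by rewrite !mmulA -(mmulA g g' h') gh' ge gh -(mmulA h' h g) hg he' hg' !eqxx.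
Qed.

Lemma corner_idem x : e ** (e ** x ** e) ** e = e ** x ** e.
Proof. by rewrite !mmulA idemP -!mmulA idemP. Qed.

Lemma inG_of_ideal u : e ** u ** e = u -> e \in ideal u -> inG e u.
Proof.
move=> ueu eu.
have ue : u ** e = u by rewrite -ueu -mmulA idemP.
have eu' : e ** u = u by rewrite -ueu !mmulA idemP.
have [z ez] : exists z, e = u ** z.
  by have := @stableR e u; rewrite eu'; apply.
have [z' ez'] : exists z', e = z' ** u.
  by have := @stableL e u; rewrite ue; apply.
apply/andP; split; first exact/eqP.
have z'e : z' ** e = e ** z by rewrite {1}ez mmulA -ez'.
apply/existsP; exists (e ** z ** e); apply/and3P; split.
- by rewrite corner_idem.
- by rewrite !mmulA ue -ez idemP.
- by rewrite -z'e -!mmulA !eu' -ez'.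
Qed.

Lemma inG_idem g : inG e g -> idem g -> g = e.
Proof.
move=> /inGP[_ ge [h [_ _ gh _]]] /eqP gg.
by rewrite -ge -{1}gh mmulA gg gh.
Qed.

End MaximalSubgroup.
End FiniteMonoid.

Section Rectangular.
Variable M : finMonoid.
Hypothesis rect : rectangular M.
Local Notation "x ** y" := (mmul x y) (at level 40, left associativity).

Lemma rectM (e f f' : M) : idem e -> idem f -> idem f' ->
  ideal f = ideal e -> ideal f' = ideal e ->
  idem (f ** f') /\ ideal (f ** f') = ideal e.
Proof. by move=> ie if1 if2 j1 j2; have /andP[-> /eqP] := rect ie if1 if2 j1 j2. Qed.

Lemma rect_aba (e a b : M) : idem e -> idem a -> idem b ->
  ideal a = ideal e -> ideal b = ideal e -> a ** b ** a = a.
Proof.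
move=> ie ia ib ja jb.
have [iab jab] := rectM ie ia ib ja jb.
have [iaba jaba] := rectM ie iab ia jab ja.
apply: (inG_idem ia _ iaba); apply: inG_of_ideal => //.
  by rewrite !mmulA (idemP ia) (mmul2l _ (idemP ia)).
by rewrite jaba -ja ideal_id.
Qed.

Lemma rect_abc (e a b c : M) : idem e -> idem a -> idem b -> idem c ->
  ideal a = ideal e -> ideal b = ideal e -> ideal c = ideal e ->
  a ** b ** c = a ** c.
Proof.
move=> ie ia ib ic ja jb jc.
have [iab jab] := rectM ie ia ib ja jb.
by rewrite -[RHS](mmul2l a (rect_aba ie ic iab jc jab)) !mmulA (rect_aba ie ia ic ja jc).
Qed.

Definition corner_unit (e m : M) := inG e (e ** m ** e).

Section Corner.
Variable e : M.
Hypothesis ide : idem e.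

(* [hm ** m] and [n ** hn] are idempotents in the J-class of [e], so the
   rectangular law [hm m e n hn = hm m n hn] removes the middle [e]. *)
Lemma corner_unit_mul m n : corner_unit e m -> corner_unit e n ->
  e ** (m ** n) ** e = (e ** m ** e) ** (e ** n ** e).
Proof.
move=> /(inGP ide)[_ _ [hm [ehm hme gmhm hmgm]]].
move=> /(inGP ide)[_ _ [hn [ehn hne gnhn hngn]]].
rewrite !mmulA hme hne in hmgm hngn.
have hmh : hm ** m ** hm = hm by rewrite -{2}ehm mmulA hmgm ehm.
have hnh : hn ** n ** hn = hn by rewrite -{2}ehn mmulA hngn ehn.
set g := hm ** m; set f := n ** hn.
have ig : idem g by rewrite /idem /g mmulA hmh.
have iff : idem f by rewrite /idem /f mmulA (mmul3l _ hnh).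
have jg : ideal g = ideal e.
  apply: ideal_eq; first by apply/idealP; exists mone, e; rewrite mmul1m /g hmgm.
  by apply/idealP; exists mone, (hm ** m); rewrite mmul1m mmulA ehm.
have jf : ideal f = ideal e.
  apply: ideal_eq; last by apply/idealP; exists n, hn; rewrite /f -mmulA ehn.
  by apply/idealP; exists e, mone; rewrite mmulm1 /f mmulA -ehn mmulA gnhn.
have emg : e ** m ** g = e ** m.
  by rewrite /g mmulA (_ : e ** m ** hm = e) // -ehm mmulA gmhm.
have fene : f ** (e ** n ** e) = n ** e.
  by rewrite /f !mmulA (mmul2l _ hne) (mmul3l _ hngn).
have lhs : e ** m ** g ** f ** (e ** n ** e) = e ** m ** n ** e.
  by rewrite -mmulA fene emg mmulA.
have rhs : e ** m ** g ** e ** f ** (e ** n ** e) = e ** m ** e ** (e ** n ** e).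
  by rewrite -mmulA fene emg !mmulA (mmul2l _ (idemP ide)).
rewrite mmulA -lhs -rhs.
by rewrite (mmul3l _ (rect_abc ide ig ide iff jg erefl jf)) !mmulA.
Qed.

Lemma corner_unitM m n :
  corner_unit e m -> corner_unit e n -> corner_unit e (m ** n).
Proof. by move=> um un; rewrite /corner_unit corner_unit_mul //; apply: inGM. Qed.

Lemma corner_unit_mull m n : corner_unit e (m ** n) -> corner_unit e m.
Proof.
move=> /inG_ideal emn.
have [z ez] : exists z, e = e ** (m ** n ** e) ** z.
  by apply: stableR; rewrite !mmulA; rewrite !mmulA in emn.
have [z0 emz] : exists z0, e ** m ** z0 = e.
  by exists (n ** e ** z); rewrite {3}ez !mmulA.
set q := z0 ** e ** m.
have iq : idem q by rewrite /idem /q !mmulA (mmul3l _ emz) (mmul2l _ (idemP ide)).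
have jq : ideal q = ideal e.
  apply: ideal_eq; last exact: mem_ideal.
  by apply/idealP; exists (e ** m), z0; rewrite /q !mmulA emz (idemP ide) emz.
have eqe := rect_aba ide ide iq erefl jq.
apply: (inG_of_ideal ide (corner_idem ide m)).
by apply/idealP; exists (e ** z0), mone; rewrite mmulm1 -{1}eqe /q !mmulA.
Qed.

Lemma corner_unit_mulr m n : corner_unit e (m ** n) -> corner_unit e n.
Proof.
move=> /inG_ideal emn.
have [z ez] : exists z, e = z ** (e ** m ** n ** e).
  by apply: stableL; rewrite !mmulA in emn.
have [z1 zne] : exists z1, z1 ** n ** e = e.
  by exists (z ** e ** m); rewrite {3}ez !mmulA.
set q := n ** e ** z1.
have iq : idem q by rewrite /idem /q !mmulA (mmul3l _ zne) (mmul2l _ (idemP ide)).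
have jq : ideal q = ideal e.
  apply: ideal_eq; last exact: mem_ideal.
  by apply/idealP; exists z1, (n ** e); rewrite /q !mmulA (mmul3l _ zne) (mmul2l _ (idemP ide)) zne.
have eqe := rect_aba ide ide iq erefl jq.
apply: (inG_of_ideal ide (corner_idem ide n)).
by apply/idealP; exists mone, (z1 ** e); rewrite mmul1m -{1}eqe /q !mmulA.
Qed.

Lemma corner_unitME m n :
  corner_unit e (m ** n) = corner_unit e m && corner_unit e n.
Proof.
apply/idP/andP => [umn|[]]; last exact: corner_unitM.
by split; [apply: corner_unit_mull umn | apply: corner_unit_mulr umn].
Qed.

Lemma idem_sandwich f : idem f -> e \in ideal f -> e ** f ** e = e.
Proof.
move=> iff /idealP[a [b he]].
have [e' [ie' je' fe']] : exists e', [/\ idem e', ideal e' = ideal e & f ** e' = e'].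
  exists (f ** b ** e ** a ** f); split.
  - rewrite /idem !mmulA (mmul2l _ (idemP iff)) (mmul3l _ (esym he)).
    by rewrite !(mmul2l _ (idemP ide)).
  - apply: ideal_eq; last by apply/idealP; exists (f ** b), (a ** f); rewrite !mmulA.
    apply/idealP; exists a, b; rewrite !mmulA -he (idemP ide).
    by rewrite (mmul3l _ (esym he)) (idemP ide).
  - by rewrite !mmulA (idemP iff).
have e'ee' := rect_aba ide ie' ide je' erefl.
set q := e' ** e ** f.
have iq : idem q by rewrite /idem /q !mmulA (mmul2l _ fe') e'ee'.
have jq : ideal q = ideal e.
  apply: ideal_eq; last exact: mem_ideal.
  apply: (ideal_trans (y := e')); last by rewrite je' ideal_id.
  by apply/idealP; exists mone, e'; rewrite mmul1m /q (mmul2l _ fe') e'ee'.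
have := rect_aba ide ide iq erefl jq.
by rewrite /q !mmulA (rect_aba ide ide ie' erefl je').
Qed.

Lemma sub_sigmaE m : (ideal e \subset sigma m) = corner_unit e m.
Proof.
have [n n0 [om iom]] := omegaP m.
apply/idP/idP => [/subsetP/(_ e (ideal_id e)) eom | um].
  have : corner_unit e (omega m) by rewrite /corner_unit idem_sandwich // inG_id.
  by rewrite om; case: n n0 {om} => // n _ /corner_unit_mull.
have upow k : corner_unit e (mpow m k).
  by elim: k => [|k IH]; [rewrite /corner_unit mmulm1 idemP // inG_id | exact: corner_unitM].
apply: ideal_sub; apply: (ideal_trans (mem_ideal e _ e)).
by apply: inG_ideal; rewrite om; apply: upow.
Qed.

Lemma corner_inG m : ideal e \subset sigma m -> inG e (e ** m ** e).
Proof. by rewrite sub_sigmaE. Qed.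

Lemma nabla_nsigma a : a \in nabla (ideal e) -> ~~ (ideal e \subset sigma a).
Proof.
rewrite inE => /negP na; apply/negP; rewrite sub_sigmaE => /inG_ideal ea.
by apply/na/ideal_sub/(ideal_trans (mem_ideal _ _ _) ea).
Qed.

Lemma corner_nabla m : ~~ (ideal e \subset sigma m) -> e ** m ** e \in nabla (ideal e).
Proof.
rewrite inE sub_sigmaE; apply: contra => /subsetP/(_ e (ideal_id e)).
exact: (inG_of_ideal ide (corner_idem ide m)).
Qed.

End Corner.
End Rectangular.

Import GRing.Theory.
Local Open Scope ring_scope.

Lemma linear_span_eq0 (K : fieldType) (V : vectType K) (W : lmodType K)
    (f : V -> W) (X : seq V) :
  linear f -> {in X, forall x, f x = 0} -> {in <<X>>%VS, forall w, f w = 0}.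
Proof.
move=> fL fX w /(coord_span (X := in_tuple X)) ->.
pose F : {linear V -> W} := HB.pack f (GRing.isLinear.Build K V W *:%R f fL).
rewrite -[f _]/(F _) linear_sum big1 // => i _.
by rewrite linearZ /= fX ?scaler0 // mem_nth.
Qed.

Section MonoidAlgebra.
Variables (M : finMonoid) (k : fieldType).
Local Notation "x ** y" := (mmul x y) (at level 40, left associativity).

Lemma bimul_is_linear (g h : M) : linear (@bimul M k g h).
Proof.
move=> c v w; apply/ffunP => t; rewrite !ffunE scaler_sumr -big_split.
by apply: eq_bigr => s _; rewrite !ffunE.
Qed.

HB.instance Definition _ (g h : M) :=
  GRing.isLinear.Build k (kM M k) (kM M k) *:%R (bimul g h) (bimul_is_linear g h).

Lemma scale_deltaE (c : k) (z t : M) : (c *: delta k z) t = if t == z then c else 0.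
Proof. by rewrite !ffunE; case: eqP => _; [apply: mulr1 | apply: mulr0]. Qed.

Lemma bimul_delta (g h z : M) : bimul g h (delta k z) = delta k (g ** z ** h).
Proof.
apply/ffunP => t; rewrite !ffunE big_mkcond (bigD1 z) //= big1 => [|s sz].
  by rewrite ffunE eqxx addr0 eq_sym; case: eqP.
by rewrite ffunE (negbTE sz); case: ifP.
Qed.

Variables (eX eY : M).

Lemma rhoXlin_is_linear : linear (rhoXlin (k := k) eX eY).
Proof.
move=> c v w; rewrite /rhoXlin scaler_sumr -big_split /=.
by apply: eq_bigr => s _; rewrite !ffunE scalerDl scalerA.
Qed.

HB.instance Definition _ :=
  GRing.isLinear.Build k (kM M k) (kM M k) *:%R (rhoXlin eX eY) rhoXlin_is_linear.

Definition dmap (A : lmodType k) (d : M -> A) (v : kM M k) : A :=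
  \sum_(s in SYX eX eY) v s *: d s.

Lemma dmap_is_linear (A : lmodType k) (d : M -> A) : linear (dmap d).
Proof.
move=> c v w; rewrite /dmap scaler_sumr -big_split.
by apply: eq_bigr => s _; rewrite !ffunE scalerDl scalerA.
Qed.

Lemma dmapZD (A : lmodType k) (c : k) (d1 d2 : M -> A) v :
  dmap (fun m => c *: d1 m + d2 m) v = c *: dmap d1 v + dmap d2 v.
Proof.
rewrite /dmap scaler_sumr -big_split; apply: eq_bigr => s _.
by rewrite scalerDr !scalerA mulrC.
Qed.

HB.instance Definition _ (A : lmodType k) (d : M -> A) :=
  GRing.isLinear.Build k (kM M k) A *:%R (dmap d) (dmap_is_linear d).

(* [vgen z] is [z - rho_X(z)]; these span [V_{X,Y}] as [z] ranges over [e_Y M e_X]. *)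
Definition vgen (z : M) : kM M k :=
  delta k z - (if ideal eX \subset sigma z then delta k (eX ** z ** eX) else 0).

End MonoidAlgebra.

(* Otherwise unification unfolds the [\subset] tests when rewriting with [gXM]. *)
Opaque sigma.

Section Bimodule.
Variables (M : finMonoid) (k : fieldType) (eX eY : M) (A : lmodType k)
  (l r : M -> {linear A -> A}).
Hypotheses (rect : rectangular M) (iX : idem eX) (iY : idem eY)
  (ltXY : idem_lt eX eY) (ltJXY : ideal eX \proper ideal eY)
  (GG : GG_module eX eY l r).
Local Notation "x ** y" := (mmul x y) (at level 40, left associativity).
Local Notation L := (lactM eY l).
Local Notation R := (ractM eX r).
Local Notation gX m := (ideal eX \subset sigma m).
Local Notation gY m := (ideal eY \subset sigma m).
Local Notation SYX := (SYX eX eY).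
Local Notation dl := (delta k).

Lemma eXeY : eX ** eY = eX. Proof. by case/and3P: ltXY => /eqP. Qed.
Lemma eYeX : eY ** eX = eX. Proof. by case/and3P: ltXY => _ /eqP. Qed.

Lemma gXM m n : gX (m ** n) = gX m && gX n.
Proof. by rewrite !sub_sigmaE // corner_unitME. Qed.

Lemma gYM m n : gY (m ** n) = gY m && gY n.
Proof. by rewrite !sub_sigmaE // corner_unitME. Qed.

Lemma gY_gX m : gY m -> gX m.
Proof. by apply: subset_trans; apply: proper_sub. Qed.

Lemma gX_inG h : inG eX h -> gX h.
Proof. by move=> hG; have [eh he _] := inGP iX hG; rewrite sub_sigmaE // /corner_unit eh he. Qed.

Lemma gY_inG g : inG eY g -> gY g.
Proof. by move=> gG; have [eg ge _] := inGP iY gG; rewrite sub_sigmaE // /corner_unit eg ge. Qed.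

Lemma gX_eX : gX eX. Proof. exact/gX_inG/inG_id. Qed.
Lemma gY_eY : gY eY. Proof. exact/gY_inG/inG_id. Qed.
Lemma gX_eY : gX eY. Proof. exact/gY_gX/gY_eY. Qed.

Lemma gX_corner m : gX (eX ** m ** eX) = gX m.
Proof. by rewrite gXM gXM gX_eX andbT. Qed.

Lemma gX_sandwich m : gX (eY ** m ** eX) = gX m.
Proof. by rewrite gXM gXM gX_eY gX_eX andbT. Qed.

Lemma corner_sandwich m : eX ** (eY ** m ** eX) ** eX = eX ** m ** eX.
Proof. by rewrite !mmulA eXeY -!mmulA (idemP iX). Qed.

Lemma corner_mulX m n : gX m -> gX n ->
  eX ** (m ** n) ** eX = (eX ** m ** eX) ** (eX ** n ** eX).
Proof. by rewrite !sub_sigmaE //; apply: corner_unit_mul. Qed.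

Lemma ngY_idealX x : x \in ideal eX -> ~~ gY x.
Proof.
move=> xX; apply/negP; rewrite sub_sigmaE // => /inG_ideal eYx.
have /ideal_sub sYX : eY \in ideal eX by apply: ideal_trans xX (ideal_trans (mem_ideal _ _ _) eYx).
by move: ltJXY; rewrite properE sYX andbF.
Qed.

Lemma l_mul g h : inG eY g -> inG eY h -> l (g ** h) =1 l g \o l h.
Proof. by case: GG => + _ _ _ _; apply. Qed.
Lemma l_id : l eY =1 id. Proof. by case: GG. Qed.
Lemma r_mul g h : inG eX g -> inG eX h -> r (g ** h) =1 r h \o r g.
Proof. by case: GG => _ _ + _ _; apply. Qed.
Lemma r_id : r eX =1 id. Proof. by case: GG. Qed.

Lemma lactM_out m a : ~~ gY m -> L m a = 0.
Proof. by rewrite /lactM => /negbTE ->. Qed.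
Lemma ractM_out m a : ~~ gX m -> R a m = 0.
Proof. by rewrite /ractM => /negbTE ->. Qed.

Lemma lactM0 m : L m 0 = 0.
Proof. by rewrite /lactM; case: ifP; rewrite ?linear0. Qed.
Lemma ractM0 m : R 0 m = 0.
Proof. by rewrite /ractM; case: ifP; rewrite ?linear0. Qed.
Lemma lactMN m a : L m (- a) = - L m a.
Proof. by rewrite /lactM; case: ifP; rewrite ?linearN ?oppr0. Qed.
Lemma ractMN m a : R (- a) m = - R a m.
Proof. by rewrite /ractM; case: ifP; rewrite ?linearN ?oppr0. Qed.

Lemma lactM_mul m n a : L (m ** n) a = L m (L n a).
Proof.
rewrite /lactM gYM; case gm: (gY m); case gn: (gY n); rewrite /= ?linear0 //.
move: gm gn; rewrite !sub_sigmaE // => um un.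
by rewrite corner_unit_mul // l_mul.
Qed.

Lemma ractM_mul m n a : R a (m ** n) = R (R a m) n.
Proof.
rewrite /ractM gXM; case gm: (gX m); case gn: (gX n); rewrite /= ?linear0 //.
move: gm gn; rewrite !sub_sigmaE // => um un.
by rewrite corner_unit_mul // r_mul.
Qed.

Lemma lactM_unit g a : inG eY g -> L g a = l g a.
Proof. by move=> gG; have [eg ge _] := inGP iY gG; rewrite /lactM gY_inG // eg ge. Qed.
Lemma ractM_unit h a : inG eX h -> R a h = r h a.
Proof. by move=> hG; have [eh he _] := inGP iX hG; rewrite /ractM gX_inG // eh he. Qed.

Lemma lactM_eY a : L eY a = a.
Proof. by rewrite lactM_unit ?l_id ?inG_id. Qed.
Lemma ractM_eX a : R a eX = a.
Proof. by rewrite ractM_unit ?r_id ?inG_id. Qed.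
Lemma ractM_eY a : R a eY = a.
Proof. by rewrite /ractM gX_eY eXeY !(idemP iX) r_id. Qed.

Lemma SYXP s : reflect (exists m, s = eY ** m ** eX) (s \in SYX).
Proof. by apply: (iffP imsetP) => [[m _ ->]|[m ->]]; exists m. Qed.

Lemma mem_SYX m : eY ** m ** eX \in SYX.
Proof. by apply/SYXP; exists m. Qed.

Lemma SYX_fix s : s \in SYX -> [/\ eY ** s = s, s ** eX = s & eY ** s ** eX = s].
Proof.
case/SYXP => m ->; rewrite !mmulA (idemP iY) -!mmulA (idemP iX).
by split; rewrite // !mmulA (idemP iY).
Qed.

Lemma SYXE s : (s \in SYX) = (eY ** s ** eX == s).
Proof. by apply/idP/eqP => [/SYX_fix[] //|<-]; apply: mem_SYX. Qed.

Lemma SYX_ngY s : s \in SYX -> ~~ gY s.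
Proof.
by case/SYXP => m ->; apply: ngY_idealX; apply/idealP; exists (eY ** m), mone; rewrite mmulm1.
Qed.

Lemma SYX_mull g y : inG eY g -> y \in SYX -> g ** y \in SYX.
Proof.
move=> gG yS; have [eg _ _] := inGP iY gG; have [_ ye _] := SYX_fix yS.
by rewrite SYXE mmulA eg -mmulA ye.
Qed.

Lemma SYX_mulr z h : inG eX h -> z \in SYX -> z ** h \in SYX.
Proof.
move=> hG zS; have [_ he _] := inGP iX hG; have [ez _ _] := SYX_fix zS.
by rewrite SYXE mmulA ez -mmulA he.
Qed.

Lemma SYX_corner z : z \in SYX -> eX ** z ** eX \in SYX.
Proof. by move=> zS; rewrite SYXE !mmulA eYeX -mmulA (idemP iX). Qed.

Lemma sum_ractM_rhoX (v : kM M k) a :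
  \sum_(s in SYX) v s *: R a s = \sum_t rhoXlin eX eY v t *: r t a.
Proof.
have Rs s : v s *: R a s = if gX s then v s *: r (eX ** s ** eX) a else 0.
  by rewrite /ractM; case: ifP; rewrite ?scaler0.
rewrite (eq_bigr _ (fun s _ => Rs s)) -big_mkcondr /=.
under [RHS]eq_bigr => t _ do rewrite /rhoXlin sum_ffunE scaler_suml.
rewrite [RHS]exchange_big /=; apply: eq_bigr => s _.
rewrite (bigD1 (eX ** s ** eX)) //= big1 => [|t /negbTE ts]; last first.
  by rewrite scale_deltaE ts scale0r.
by rewrite scale_deltaE eqxx addr0.
Qed.

Lemma sum_ractM_ker (v : kM M k) a :
  rhoXlin eX eY v = 0 -> \sum_(s in SYX) v s *: R a s = 0.
Proof. by rewrite sum_ractM_rhoX => ->; apply: big1 => t _; rewrite ffunE scale0r. Qed.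

Local Notation kS := (kS k eX eY).
Local Notation KYX := (KYX k eX eY).
Local Notation ZYX := (ZYX k eX eY).
Local Notation rhoX := (rhoXlin (k := k) eX eY).
Local Notation vgen := (vgen k eX).

Lemma delta_kS z : z \in SYX -> dl z \in kS.
Proof. by move=> zS; apply/memv_span/map_f; rewrite mem_enum. Qed.

Lemma kS_supp (v : kM M k) s : v \in kS -> s \notin SYX -> v s = 0.
Proof.
move=> vS sS; apply: (linear_span_eq0 (W := k^o) (f := fun v : kM M k => v s)) vS.
  by move=> c u w; rewrite !ffunE.
move=> x /mapP[z]; rewrite mem_enum => zS ->; rewrite ffunE.
by case: eqP => // sz; rewrite sz zS in sS.
Qed.

Lemma kS_expand (v : kM M k) : v \in kS -> v = \sum_(s in SYX) v s *: dl s.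
Proof.
move=> vS; apply/ffunP => t; rewrite sum_ffunE.
case: (boolP (t \in SYX)) => tS.
  rewrite (bigD1 t) //= big1 => [|s /andP[_ /negbTE st]]; last by rewrite scale_deltaE eq_sym st.
  by rewrite scale_deltaE eqxx addr0.
rewrite kS_supp // big1 // => s sS; rewrite scale_deltaE.
by case: eqP => [ts|//]; rewrite ts sS in tS.
Qed.

Lemma rhoX_delta z : rhoX (dl z) = if (z \in SYX) && gX z then dl (eX ** z ** eX) else 0.
Proof.
rewrite /rhoXlin; case: ifP => zS.
  rewrite (bigD1 z) //= big1 => [|s /andP[_ /negbTE sz]]; last by rewrite ffunE sz scale0r.
  by rewrite ffunE eqxx scale1r addr0.
apply: big1 => s /andP[sS gs]; rewrite ffunE; case: eqP => [sz|_]; last by rewrite scale0r.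
by rewrite -sz sS gs in zS.
Qed.

Lemma KYXP v : (v \in KYX) = (v \in kS) && (rhoX v == 0).
Proof. by rewrite memv_cap memv_ker lfunE. Qed.

Lemma vgen_KYX z : z \in SYX -> vgen z \in KYX.
Proof.
move=> zS; rewrite KYXP rpredB ?delta_kS //=; last first.
  by case: ifP; rewrite ?rpred0 ?delta_kS ?SYX_corner.
rewrite /vgen linearB /= !rhoX_delta zS /=; case: ifP => gz; last by rewrite linear0 subrr.
by rewrite rhoX_delta SYX_corner //= gX_corner gz corner_idem // subrr.
Qed.

Lemma KYX_expand (w : kM M k) : w \in KYX -> \sum_(s in SYX) w s *: vgen s = w.
Proof.
rewrite KYXP => /andP[wS /eqP rw].
rewrite (eq_bigr (fun s =>
    w s *: dl s - (if gX s then w s *: dl (eX ** s ** eX) else 0))); last first.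
  by move=> s _; rewrite scalerBr; case: ifP; rewrite ?scaler0.
by rewrite sumrB -(kS_expand wS) -big_mkcondr /= -[X in _ - X]/(rhoX w) rw subr0.
Qed.

Section Derivation.
Variable d : M -> A.
Hypothesis dd : derivation eX eY l r d.

Lemma derivation_eY : d eY = 0.
Proof.
have := dd eY eY; rewrite (idemP iY) lactM_eY ractM_eY => ddY.
by apply: (addrI (d eY)); rewrite addr0 -ddY.
Qed.

Lemma derivation_eYl q : d (eY ** q) = d q.
Proof. by rewrite dd lactM_eY derivation_eY ractM0 addr0. Qed.

Lemma derivation_NN z : NN eX eY z -> d z = 0.
Proof.
case/andP=> _ /existsP[a /existsP[b /and3P[na nb /eqP ->]]].
by rewrite dd lactM_out ?ractM_out ?addr0 // (nabla_nsigma rect _ na, nabla_nsigma rect _ nb).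
Qed.

Lemma derivation_simgen z z' : simgen eX eY z z' -> d z = d z'.
Proof.
case/orP=> [|/andP[/derivation_NN-> /derivation_NN->] //].
case/existsP=> m /existsP[n /andP[/eqP -> /orP[/eqP ->|/andP[ngm /eqP ->]]]].
  rewrite (_ : _ ** (m ** n) ** _ = (eY ** m) ** (n ** eX)); last by rewrite !mmulA.
  rewrite (_ : _ ** eY ** n ** _ = (eY ** m) ** (eY ** (n ** eX))); last by rewrite !mmulA.
  by rewrite !(dd (eY ** m)) !derivation_eYl (ractM_mul eY) ractM_eY.
rewrite (_ : _ ** (m ** n) ** _ = (eY ** m) ** (n ** eX)); last by rewrite !mmulA.
rewrite (_ : _ ** eX ** n ** _ = (eY ** m) ** (eX ** (n ** eX))); last by rewrite !mmulA.
rewrite !(dd (eY ** m)) !lactM_mul !(lactM_out _ ngm) !lactM0 !add0r.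
by rewrite (ractM_mul eX) ractM_eX.
Qed.

Lemma derivation_sim z z' : sim eX eY z z' -> d z = d z'.
Proof.
case/and3P=> _ _ /connectP[p pth ->] {z'}.
elim: p z pth => [//|y p IH] z /= /andP[zy pth].
have -> : d z = d y by case/orP: zy => /derivation_simgen ->.
exact: IH.
Qed.

Lemma dmap_delta z : dmap eX eY d (dl z) = if z \in SYX then d z else 0.
Proof.
rewrite /dmap; case: ifP => zS.
  rewrite (bigD1 z) //= big1 => [|s /andP[_ /negbTE sz]]; last by rewrite ffunE sz scale0r.
  by rewrite ffunE eqxx scale1r addr0.
apply: big1 => s sS; rewrite ffunE; case: eqP => [sz|_]; last by rewrite scale0r.
by rewrite -sz sS in zS.
Qed.

Lemma dmap_ZYX w : w \in ZYX -> dmap eX eY d w = 0.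
Proof.
case/memv_addP=> u uN [v vS ->]; rewrite linearD /=.
have dmap_span0 := linear_span_eq0 (dmap_is_linear eX eY d).
rewrite (dmap_span0 _ _ _ uN) ?(dmap_span0 _ _ _ vS) ?addr0 //.
  move=> x /mapP[[a b] /=]; rewrite mem_filter => /andP[sab _] ->.
  rewrite linearB /= !dmap_delta; case/and3P: (sab) => -> -> _.
  by rewrite (derivation_sim sab) subrr.
move=> x /mapP[z]; rewrite mem_filter => /andP[nz _] ->.
by rewrite dmap_delta; case/andP: (nz) => -> _; rewrite derivation_NN.
Qed.

(* Expanding [d (g s h)] leaves the term [R (d g) s], which is annihilated by
   summation against an element of the kernel of [rho_X]. *)
Lemma dmap_equivariant g h v : inG eY g -> inG eX h -> v \in KYX ->
  dmap eX eY d (bimul g h v) = l g (r h (dmap eX eY d v)).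
Proof.
move=> gG hG; rewrite KYXP => /andP[vS /eqP rv].
rewrite {1}(kS_expand vS) !linear_sum /=.
rewrite (eq_bigr (fun s => v s *: l g (r h (d s)) + r h (v s *: R (d g) s))); last first.
  move=> s sS; rewrite linearZ /= bimul_delta linearZ /= dmap_delta SYX_mulr ?SYX_mull //.
  rewrite -mmulA dd dd (lactM_out _ (SYX_ngY sS)) add0r ractM_mul.
  by rewrite lactM_unit // !(ractM_unit _ hG) linearZ scalerDr.
rewrite big_split /= -linear_sum /= sum_ractM_ker // linear0 addr0.
by apply: eq_bigr => s _; rewrite !linearZ.
Qed.

Lemma dmap_vgen z : z \in SYX ->
  dmap eX eY d (vgen z) = d z - (if gX z then d (eX ** z ** eX) else 0).
Proof.
move=> zS; rewrite linearB /= dmap_delta zS; case: ifP => _; last by rewrite linear0.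
by rewrite dmap_delta SYX_corner.
Qed.

Lemma inner_of_dmap_vgen : (forall z, z \in SYX -> dmap eX eY d (vgen z) = 0) ->
  forall m, d m = L m (- d eX) - R (- d eX) m.
Proof.
move=> d0 m; set z := eY ** m ** eX.
have dz : d z = R (d eX) z.
  move: (d0 z (mem_SYX m)); rewrite dmap_vgen ?mem_SYX // => /eqP; rewrite subr_eq0 => /eqP ->.
  case: ifP => gz; last by rewrite ractM_out ?gz.
  rewrite -mmulA dd lactM_out ?add0r ?ractM_mul ?ractM_eX //.
  by apply/ngY_idealX/ideal_id.
have dzm : d z = L m (d eX) + d m by rewrite /z dd lactM_mul lactM_eY derivation_eYl ractM_eX.
have Rz : R (d eX) z = R (d eX) m by rewrite /z !ractM_mul ractM_eY ractM_eX.
by rewrite lactMN ractMN opprK -Rz -dz dzm addrA addNr add0r.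
Qed.

End Derivation.

Lemma dmap_inner (d : M -> A) a v :
  (forall m, d m = L m a - R a m) -> v \in KYX -> dmap eX eY d v = 0.
Proof.
move=> da; rewrite KYXP => /andP[vS /eqP rv].
rewrite /dmap (eq_bigr (fun s => - (v s *: R a s))) => [|s sS]; last first.
  by rewrite da lactM_out ?SYX_ngY // sub0r scalerN.
by rewrite sumrN sum_ractM_ker // oppr0.
Qed.

Lemma vgen_mulr z h : z \in SYX -> inG eX h -> vgen (z ** h) = bimul eY h (vgen z).
Proof.
move=> zS hG; have [eh he _] := inGP iX hG; have [ez _ _] := SYX_fix zS.
rewrite /vgen linearB /= bimul_delta mmulA ez gXM (gX_inG hG) andbT.
case: ifP => gz; rewrite ?linear0 // bimul_delta.
by rewrite -(mmulA eX z h) corner_mulX ?(gX_inG hG) // eh he !mmulA eYeX.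
Qed.

Lemma vgen_mull g y : inG eY g -> y \in SYX ->
  vgen (g ** y) = bimul g eX (vgen y) + (if gX y then vgen (g ** (eX ** y ** eX)) else 0).
Proof.
move=> gG yS; have gXg := gY_gX (gY_inG gG); have [_ ye _] := SYX_fix yS.
rewrite /vgen linearB /= bimul_delta -[g ** y ** eX]mmulA ye (gXM g y) gXg /=.
case: ifP => gy; last by rewrite !linear0 ?oppr0 ?subr0 !addr0.
set ry := eX ** y ** eX.
have ryX : ry ** eX = ry by rewrite -mmulA (idemP iX).
rewrite bimul_delta -[g ** ry ** eX]mmulA ryX gXM gXg gX_corner gy /=.
rewrite (@corner_mulX g ry) //; last by rewrite /ry gX_corner.
by rewrite /ry (corner_idem iX) -(corner_mulX gXg gy) addrA subrK.
Qed.

Section Hom.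
Variable f : subvs_of KYX -> A.
Hypothesis hf : homV l r f.

Let f_lin : linear f. Proof. by case: hf. Qed.
Let fL : {linear subvs_of KYX -> A} := HB.pack f (GRing.isLinear.Build k _ _ *:%R f f_lin).

Let f_ZYX x : vsval x \in ZYX -> f x = 0.
Proof. by case: hf => _ + _; apply. Qed.

Let f_equivariant g h (v w : subvs_of KYX) : inG eY g -> inG eX h ->
  vsval w = bimul g h (vsval v) -> f w = l g (r h (f v)).
Proof. by case: hf => _ _; apply. Qed.

Definition vgenK z : subvs_of KYX := vsproj KYX (vgen z).

Lemma vgenKE z : z \in SYX -> vsval (vgenK z) = vgen z.
Proof. by move=> zS; rewrite vsprojK ?vgen_KYX. Qed.

Definition hom_derivation (m : M) : A := f (vgenK (eY ** m ** eX)).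

Lemma dmap_hom_derivation v : dmap eX eY hom_derivation (vsval v) = f v.
Proof.
rewrite /dmap (eq_bigr (fun s => vsval v s *: f (vgenK s))); last first.
  by move=> s sS; rewrite /hom_derivation; have [_ _ ->] := SYX_fix sS.
transitivity (fL (\sum_(s in SYX) (vsval v s : k) *: vgenK s)).
  by rewrite linear_sum; apply: eq_bigr => s _; rewrite linearZ.
congr f; apply: subvs_inj; rewrite linear_sum /= -{2}(KYX_expand (subvsP v)).
by apply: eq_bigr => s sS; rewrite vgenKE.
Qed.

Local Notation fv z := (f (vgenK z)).

Lemma fv_sim z z' : sim eX eY z z' ->
  gX z = gX z' -> (gX z -> eX ** z ** eX = eX ** z' ** eX) -> fv z = fv z'.
Proof.
move=> szz gzz rz; have /and3P[zS z'S _] := szz.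
apply/eqP; rewrite -subr_eq0 -[_ - _]/(fL _ - fL _) -linearB.
apply/eqP/f_ZYX; rewrite linearB /= !vgenKE //.
have -> : vgen z - vgen z' = dl z - dl z'.
  rewrite /vgen -gzz; case: ifP => gz; last by rewrite !subr0.
  by rewrite rz // opprB addrA subrK.
apply: (subvP (addvSr _ _)); apply/memv_span/mapP; exists (z, z') => //.
by rewrite mem_filter szz; apply: allpairs_f; rewrite mem_enum.
Qed.

Lemma fv_NN z : NN eX eY z -> ~~ gX z -> fv z = 0.
Proof.
move=> nz ngz; have zS : z \in SYX by case/andP: nz.
apply: f_ZYX; rewrite vgenKE // /vgen (negbTE ngz) subr0.
apply: (subvP (addvSl _ _)); apply/memv_span/mapP; exists z => //.
by rewrite mem_filter nz mem_enum.
Qed.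

Lemma fv_mulr z h : z \in SYX -> inG eX h -> fv (z ** h) = r h (fv z).
Proof.
move=> zS hG; rewrite (@f_equivariant eY h (vgenK z)) ?inG_id ?l_id //.
by rewrite !vgenKE ?SYX_mulr // vgen_mulr.
Qed.

Lemma fv_mull g y : inG eY g -> y \in SYX ->
  fv (g ** y) = l g (fv y) + (if gX y then fv (g ** (eX ** y ** eX)) else 0).
Proof.
move=> gG yS; have gyS := SYX_mull gG yS.
have gryS := SYX_mull gG (SYX_corner yS).
have vK : bimul g eX (vgen y) \in KYX.
  rewrite -[bimul _ _ _](addrK (if gX y then vgen (g ** (eX ** y ** eX)) else 0)).
  rewrite -vgen_mull // rpredB ?vgen_KYX //; case: ifP; rewrite ?rpred0 ?vgen_KYX //.
have -> : vgenK (g ** y) = vsproj KYX (bimul g eX (vgen y)) +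
    (if gX y then vgenK (g ** (eX ** y ** eX)) else 0).
  apply: subvs_inj; rewrite linearD /= vgenKE // vsprojK // vgen_mull //.
  by case: ifP; rewrite ?linear0 ?vgenKE.
rewrite -[f _]/(fL _) linearD /= (@f_equivariant g eX (vgenK y)) ?inG_id ?r_id //.
  by case: ifP => // _; rewrite -[f 0]/(fL 0) linear0.
by rewrite vsprojK ?vgenKE.
Qed.

Lemma fv_sim_sandwich m n : sim eX eY (eY ** m ** eX) (eY ** n ** eX) ->
  gX m = gX n -> (gX m -> eX ** m ** eX = eX ** n ** eX) ->
  fv (eY ** m ** eX) = fv (eY ** n ** eX).
Proof.
move=> smn gmn rmn; apply: fv_sim => //.
  by rewrite (gX_sandwich m) (gX_sandwich n).
by rewrite (gX_sandwich m) !corner_sandwich.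
Qed.

Lemma fv_insert_eY m n : fv (eY ** (m ** n) ** eX) = fv (eY ** m ** eY ** n ** eX).
Proof.
rewrite (_ : _ ** eY ** n ** _ = eY ** (m ** eY ** n) ** eX); last by rewrite !mmulA.
apply: fv_sim_sandwich.
- apply/and3P; split; rewrite ?mem_SYX //; apply/connect1/orP; left.
  apply/orP; left; apply/existsP; exists m; apply/existsP; exists n.
  by rewrite eqxx /= !mmulA eqxx.
- by rewrite (gXM (m ** eY)) (gXM m eY) (gXM m n) gX_eY andbT.
rewrite (gXM m n) => /andP[gm gn].
have gmY : gX (m ** eY) by rewrite (gXM m eY) gm gX_eY.
rewrite (corner_mulX gm gn) (corner_mulX gmY gn) (corner_mulX gm gX_eY).
by rewrite eXeY (idemP iX) -[eX ** m ** eX ** eX]mmulA (idemP iX).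
Qed.

Lemma fv_insert_eX m n : ~~ gY m ->
  fv (eY ** (m ** n) ** eX) = fv (eY ** m ** eX ** n ** eX).
Proof.
move=> ngm; rewrite (_ : _ ** eX ** n ** _ = eY ** (m ** eX ** n) ** eX); last by rewrite !mmulA.
apply: fv_sim_sandwich.
- apply/and3P; split; rewrite ?mem_SYX //; apply/connect1/orP; left.
  apply/orP; left; apply/existsP; exists m; apply/existsP; exists n.
  by rewrite eqxx /= ngm !mmulA eqxx orbT.
- by rewrite (gXM (m ** eX)) (gXM m eX) (gXM m n) gX_eX andbT.
rewrite (gXM m n) => /andP[gm gn].
have gmX : gX (m ** eX) by rewrite (gXM m eX) gm gX_eX.
rewrite (corner_mulX gm gn) (corner_mulX gmX gn) (corner_mulX gm gX_eX).
by rewrite !(idemP iX) -[eX ** m ** eX ** eX]mmulA (idemP iX).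
Qed.

Lemma fv_nabla m n : ~~ gY m -> ~~ gX n -> fv (eY ** (m ** n) ** eX) = 0.
Proof.
move=> ngm ngn; rewrite fv_insert_eX //.
have -> : eY ** m ** eX ** n ** eX = (eY ** m ** eY) ** (eX ** n ** eX).
  by rewrite !mmulA (mmul2l _ eYeX).
apply: fv_NN; last by rewrite (gXM (eY ** m ** eY)) gX_corner (negbTE ngn) andbF.
apply/andP; split.
  by apply/SYXP; exists (m ** eX ** n); rewrite !mmulA (mmul2l _ eYeX).
apply/existsP; exists (eY ** m ** eY); apply/existsP; exists (eX ** n ** eX).
by rewrite (corner_nabla rect iY ngm) (corner_nabla rect iX ngn) eqxx.
Qed.

Lemma fv_ractM m n : gX n -> fv (eY ** m ** eX ** n ** eX) = R (fv (eY ** m ** eX)) n.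
Proof.
move=> gn; rewrite /ractM gn -fv_mulr ?mem_SYX ?(corner_inG rect iX) //.
by rewrite !mmulA (mmul2l _ (idemP iX)).
Qed.

Lemma hom_derivation_is_derivation : derivation eX eY l r hom_derivation.
Proof.
move=> m n; rewrite /hom_derivation.
have fvR : (if gX n then fv (eY ** m ** eX ** n ** eX) else 0) = R (fv (eY ** m ** eX)) n.
  by case: ifP => gn; [rewrite fv_ractM | rewrite ractM_out ?gn].
case: (boolP (gY m)) => gm.
  have gG := corner_inG rect iY gm.
  rewrite fv_insert_eY (_ : _ ** eY ** n ** _ = (eY ** m ** eY) ** (eY ** n ** eX)); last first.
    by rewrite !mmulA (mmul2l _ (idemP iY)).
  rewrite fv_mull ?mem_SYX // (gX_sandwich n) corner_sandwich -fvR /lactM gm.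
  rewrite (_ : eY ** m ** eY ** (eX ** n ** eX) = eY ** m ** eX ** n ** eX) //.
  by rewrite !mmulA (mmul2l _ eYeX).
rewrite lactM_out // add0r -fvR; case: ifP => gn; last by rewrite fv_nabla ?gn.
by rewrite fv_insert_eX.
Qed.

End Hom.

Lemma dmap_homV d : derivation eX eY l r d ->
  homV l r (fun v : subvs_of KYX => dmap eX eY d (vsval v)).
Proof.
move=> dd; split=> [c x y|v|g h v w gG hG ->]; first by rewrite linearP.
  exact: dmap_ZYX.
by apply: dmap_equivariant; last exact: subvsP.
Qed.

Lemma dmap_eq0_inner d : derivation eX eY l r d ->
  (forall v : subvs_of KYX, dmap eX eY d (vsval v) = 0) <-> inner_derivation eX eY l r d.
Proof.
move=> dd; split=> [d0|[a da] v]; last exact: dmap_inner da (subvsP v).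
exists (- d eX); apply: inner_of_dmap_vgen => // z zS.
by have := d0 (vgenK z); rewrite vgenKE.
Qed.

End Bimodule.

Theorem mainTheorem16 (M : finMonoid) (k : fieldType) (eX eY : M)
  (A : lmodType k) (l r : M -> {linear A -> A}) :
  rectangular M ->
  splitting_field_for_max_subgroups M k ->
  idem eX -> idem eY -> idem_lt eX eY ->
  ideal eX \proper ideal eY ->
  GG_module eX eY l r ->
  exists Phi : (M -> A) -> (subvs_of (KYX k eX eY) -> A),
    [/\ forall (c : k) (d1 d2 : M -> A),
          derivation eX eY l r d1 -> derivation eX eY l r d2 ->
          Phi (fun m => c *: d1 m + d2 m) =1 (fun v => c *: Phi d1 v + Phi d2 v),
        forall d, derivation eX eY l r d -> homV l r (Phi d),
        forall f, homV l r f -> exists d, derivation eX eY l r d /\ Phi d =1 f &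
        forall d, derivation eX eY l r d ->
          (Phi d =1 (fun _ => 0) <-> inner_derivation eX eY l r d)].
Proof.
move=> rect _ iX iY ltXY ltJXY GG.
exists (fun d v => dmap eX eY d (vsval v)); split.
- by move=> c d1 d2 _ _ v; apply: dmapZD.
- exact: (dmap_homV rect iX iY ltXY ltJXY GG).
- move=> f hf; exists (hom_derivation f); split.
    exact: (hom_derivation_is_derivation rect iX iY ltXY ltJXY GG hf).
  exact: (dmap_hom_derivation rect iX iY ltXY hf).
- exact: (dmap_eq0_inner rect iX iY ltXY ltJXY GG).
Qed.
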